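(* Let $K\subset\mathbb{R}^n$ be a convex body with smooth boundary and let $\gamma$ be a periodic billiard trajectory on $K$. Set $\mathcal{N}=\{\nu(\gamma(t)):t\in\mathcal{B}_\gamma\}$. Then $0\in\mathrm{conv}(\mathcal{N})$ and $h(K:\nu)\le h(\gamma(S^1):\nu)$ for every $\nu\in\mathcal{N}$. In particular $\mathcal{P}(K)\subset\mathcal{P}^+(K)$.
   Context: A convex body is a compact convex set with nonempty interior; $S^1=\mathbb{R}/\mathbb{Z}$; $K$ is regarded as a Riemannian manifold with boundary with the Euclidean metric. A nonconstant continuous $\gamma:S^1\to K$ is a periodic billiard trajectory if there is a finite $\mathcal{B}_\gamma\subset S^1$ with $\ddot\gamma\equiv0$ off $\mathcal{B}_\gamma$ and for each $t\in\mathcal{B}_\gamma$: $\gamma(t)\in\partial K$, $\dot\gamma^+(t)+\dot\gamma^-(t)\in T_{\gamma(t)}\partial K$, $\dot\gamma^+(t)-\dot\gamma^-(t)\in(T_{\gamma(t)}\partial K)^\perp\setminus\{0\}$, where $\dot\gamma^\pm(t)=\lim_{h\to0\pm}\dot\gamma(t+h)$. $\mathcal{P}(K)$ is the set of periodic billiard trajectories on $K$. For $q\in\partial K$, $\nu(q)$ is the outer unit normal. For compact $S$, $h(S:\nu)=\max\{s\cdot\nu:s\in S\}$. $\mathcal{P}^+(K)$ is the set of piecewise linear closed curves $\gamma:S^1\to\mathbb{R}^n$ with $\gamma(S^1)+x\not\subset\mathrm{int}\,K$ for all $x\in\mathbb{R}^n$. *)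

From HB Require Import structures.
From mathcomp Require Import all_boot all_order all_algebra.
From mathcomp Require Import all_classical all_reals all_analysis.
Set Implicit Arguments. Unset Strict Implicit. Unset Printing Implicit Defensive.
Import Order.TTheory GRing.Theory Num.Theory.
Import numFieldNormedType.Exports.
Local Open Scope classical_set_scope.
Local Open Scope ring_scope.

Section Defs.
Variables (R : realType) (n : nat).
Notation V := 'rV[R]_n.

Definition dotv (u v : V) : R := \sum_(i < n) u 0 i * v 0 i.

Definition convex_set (K : set V) : Prop :=
  forall x y (l : R), K x -> K y -> 0 <= l <= 1 -> K (l *: x + (1 - l) *: y).
Definition convex_body (K : set V) : Prop :=
  compact K /\ convex_set K /\ (K°) !=set0.

Definition bdry (K : set V) : set V := K `\` K°.

Fixpoint iterD (vs : seq V) (f : V -> R) : V -> R :=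
  if vs is v :: vs' then (fun x => 'D_v (iterD vs' f) x) else f.

Definition smooth_on (U : set V) (f : V -> R) : Prop :=
  forall vs : seq V,
    (forall x, U x -> {for x, continuous (iterD vs f)}) /\
    (forall x v, U x -> derivable (iterD vs f) x v).

Definition gradv (f : V -> R) (x : V) : V := \row_(i < n) 'D_('e_i) f x.

Definition local_defining_fun (K : set V) (q : V) (U : set V) (f : V -> R) :=
  [/\ open U /\ U q, smooth_on U f, f q = 0, gradv f q != 0 &
      K `&` U = [set x | U x /\ f x <= 0]].

Definition smooth_boundary (K : set V) : Prop :=
  forall q, bdry K q -> exists U f, local_defining_fun K q U f.

Definition is_outer_normal (K : set V) (q nu : V) : Prop :=
  exists U f, local_defining_fun K q U f /\
    nu = (Num.sqrt (dotv (gradv f q) (gradv f q)))^-1 *: gradv f q.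
Definition outer_normal (K : set V) (q : V) : V :=
  xget 0 [set nu | is_outer_normal K q nu].

Definition tangent_space (K : set V) (q : V) : set V :=
  [set v | dotv v (outer_normal K q) = 0].
Definition orth (S : set V) : set V := [set w | forall v, S v -> dotv w v = 0].

Definition supp_fun (S : set V) (nu : V) : R := sup [set dotv s nu | s in S].

Definition conv_hull (S : set V) : set V :=
  [set x | exists (m : nat) (p : 'I_m -> V) (w : 'I_m -> R),
     [/\ forall i, S (p i), forall i, 0 <= w i, \sum_i w i = 1 &
         x = \sum_i w i *: p i]].

(* S^1 = R/Z: curves are 1-periodic maps R -> R^n; a finite subset of S^1
   is a 1-periodic set of reals with finitely many points in [0,1) *)
Definition periodic_curve (g : R -> V) : Prop := forall t, g (t + 1) = g t.
Definition finite_in_S1 (B : set R) : Prop :=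
  (forall t, B t <-> B (t + 1)) /\ finite_set (B `&` `[0, 1[).

Definition billiard_traj (K : set V) (g : R -> V) (B : set R) : Prop :=
  [/\ periodic_curve g /\ continuous g, (exists s t, g s != g t),
      (forall t, K (g t)) /\ finite_in_S1 B,
      (forall t, ~ B t ->
         [/\ derivable g t 1, derivable (derive1 g) t 1 & derive1 (derive1 g) t = 0]) &
      (forall t, B t -> bdry K (g t) /\
         exists vp vm : V,
           [/\ (derive1 g (t + h)) @[h --> 0^'+] --> vp,
               (derive1 g (t + h)) @[h --> 0^'-] --> vm,
               tangent_space K (g t) (vp + vm),
               orth (tangent_space K (g t)) (vp - vm) & vp - vm != 0])].

Definition periodic_billiard (K : set V) (g : R -> V) : Prop :=
  exists B, billiard_traj K g B.

Definition piecewise_linear_closed (g : R -> V) : Prop :=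
  [/\ periodic_curve g, continuous g &
      exists B, finite_in_S1 B /\
        forall a b, a < b -> (forall t, a < t < b -> ~ B t) ->
          exists p v : V, forall t, a <= t <= b -> g t = p + t *: v].

Definition in_Pplus (K : set V) (g : R -> V) : Prop :=
  piecewise_linear_closed g /\
  forall x : V, ~ (forall t, (K°) (g t + x)).

End Defs.

(** Between two reflections a billiard trajectory is a straight segment.  At a
    reflection time t the velocity jump v⁺ - v⁻ is orthogonal to the tangent
    space, hence equal to α ν(γ(t)); since K lies in the supporting half-space
    {x · ν ≤ γ(t) · ν} and γ stays in K, the outgoing velocity satisfies
    v⁺ · ν ≤ 0 ≤ v⁻ · ν, so α < 0.  Over one period the jumps telescope to 0,
    and there is at least one reflection because a closed straight path is
    constant; hence Σ α_t ν_t = 0 with all α_t < 0, i.e. 0 ∈ conv N.  The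
    support inequality is the supporting half-space at γ(t).  Finally, if
    γ + x lay in the interior of K then x · ν < 0 for every ν ∈ N, which is
    impossible when 0 ∈ conv N. *)

From Pilot Require Import Defs.
From HB Require Import structures.
From mathcomp Require Import all_boot all_order all_algebra.
From mathcomp Require Import all_classical all_reals all_analysis.
From mathcomp Require Import lra.
From mathcomp Require Import finmap.
Set Implicit Arguments. Unset Strict Implicit. Unset Printing Implicit Defensive.
Import Order.TTheory GRing.Theory Num.Theory.
Import numFieldNormedType.Exports.
Local Open Scope classical_set_scope.
Local Open Scope ring_scope.

Section InnerProduct.
Variables (R : realType) (n : nat).
Notation V := 'rV[R]_n.
Implicit Types u v w : V.

Lemma dotvC u v : dotv u v = dotv v u.
Proof. by apply: eq_bigr => i _; rewrite mulrC. Qed.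

Lemma dotvDl u v w : dotv (u + v) w = dotv u w + dotv v w.
Proof. by rewrite /dotv -big_split; apply: eq_bigr => i _; rewrite mxE mulrDl. Qed.

Lemma dotvZl (a : R) u w : dotv (a *: u) w = a * dotv u w.
Proof. by rewrite /dotv mulr_sumr; apply: eq_bigr => i _; rewrite mxE mulrA. Qed.

Lemma dotvNl u w : dotv (- u) w = - dotv u w.
Proof. by rewrite -scaleN1r dotvZl mulN1r. Qed.

Lemma dotvBl u v w : dotv (u - v) w = dotv u w - dotv v w.
Proof. by rewrite dotvDl dotvNl. Qed.

Lemma dotv0l w : dotv 0 w = 0.
Proof. by rewrite /dotv big1 // => i _; rewrite mxE mul0r. Qed.

Lemma dotvDr u v w : dotv w (u + v) = dotv w u + dotv w v.
Proof. by rewrite !(dotvC w) dotvDl. Qed.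

Lemma dotvZr (a : R) u w : dotv w (a *: u) = a * dotv w u.
Proof. by rewrite !(dotvC w) dotvZl. Qed.

Lemma dotv0r w : dotv w 0 = 0.
Proof. by rewrite dotvC dotv0l. Qed.

Lemma dotv_sumr (I : Type) (r : seq I) (w : I -> R) (p : I -> V) x :
  dotv x (\sum_(i <- r) w i *: p i) = \sum_(i <- r) w i * dotv x (p i).
Proof.
rewrite (big_morph (dotv x) (fun a b => dotvDr a b x) (dotv0r x)).
by apply: eq_bigr => i _; rewrite dotvZr.
Qed.

Lemma dotvv_ge0 u : 0 <= dotv u u.
Proof. by apply: sumr_ge0 => i _; rewrite -expr2 sqr_ge0. Qed.

Lemma dotvv_eq0 u : dotv u u = 0 -> u = 0.
Proof.
move=> /eqP; rewrite psumr_eq0; last by move=> i _; rewrite -expr2 sqr_ge0.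
move=> /allP uu0; apply/rowP => i; rewrite mxE.
by have /(_ (mem_index_enum i)) := uu0 i; rewrite -expr2 sqrf_eq0 => /eqP.
Qed.

Lemma dotvv_gt0 u : u != 0 -> 0 < dotv u u.
Proof.
move=> u0; rewrite lt_def dotvv_ge0 andbT; apply/eqP => /dotvv_eq0 /eqP.
by rewrite (negPf u0).
Qed.

Lemma orth_hyperplane_parallel (nu w : V) : nu != 0 ->
  orth [set v | dotv v nu = 0] w -> w = (dotv w nu / dotv nu nu) *: nu.
Proof.
move=> nu0 ortho; set a := dotv w nu / dotv nu nu.
have nn : dotv nu nu != 0 by rewrite gt_eqF // dotvv_gt0.
set u := w - a *: nu.
have un : dotv u nu = 0 by rewrite /u dotvBl dotvZl /a divfK // subrr.
have wu : dotv w u = 0 by apply: ortho.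
have uu : dotv u u = 0.
  by rewrite {1}/u dotvBl dotvZl (dotvC nu) un mulr0 subr0.
by apply/eqP; rewrite -subr_eq0; apply/eqP; apply: dotvv_eq0.
Qed.

Lemma conv_hull0_pos_comb (T : eqType) (P : set T) (p : T -> V) (w : T -> R)
    (s : seq T) :
  s != [::] -> (forall t, t \in s -> P t /\ 0 < w t) ->
  \sum_(t <- s) w t *: p t = 0 -> conv_hull [set p t | t in P] 0.
Proof.
move=> sn Ps sum0.
have S0 : 0 < \sum_(t <- s) w t.
  case: s sn Ps {sum0} => // t0 s _ Ps; rewrite big_cons.
  apply: (lt_le_trans (Ps t0 (mem_head _ _)).2); rewrite lerDl big_seq.
  by apply: sumr_ge0 => t ts; rewrite ltW // (Ps t _).2 // inE ts orbT.
set S := \sum_(t <- s) w t in S0.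
set r_ := tnth (in_tuple s).
have Pr i : P (r_ i) /\ 0 < w (r_ i) by apply: Ps; exact: mem_tnth.
have sum_tnth (U : nmodType) (F : T -> U) :
    \sum_(i < size s) F (r_ i) = \sum_(t <- s) F t.
  by rewrite (big_tnth _ _ s).
exists (size s), (fun i => p (r_ i)), (fun i => w (r_ i) / S); split.
- by move=> i; exists (r_ i); first exact: (Pr i).1.
- by move=> i; rewrite divr_ge0 ?ltW // (Pr i).2.
- by rewrite -mulr_suml sum_tnth mulfV // gt_eqF.
- under eq_bigr do rewrite mulrC -scalerA.
  by rewrite -scaler_sumr (sum_tnth _ (fun t => w t *: p t)) sum0 scaler0.
Qed.

Lemma conv_hull0_not_below (S : set V) x :
  conv_hull S 0 -> ~ (forall nu, S nu -> dotv x nu < 0).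
Proof.
move=> [m [p [w [Sp w0 w1 E]]]] below.
have [[i wi]|nw] := pselect (exists i, w i != 0); last first.
  move: w1; rewrite big1; first by move/eqP; rewrite eq_sym oner_eq0.
  by move=> i _; apply/eqP/negPn/negP => wi; apply: nw; exists i.
have : dotv x 0 = \sum_i w i * dotv x (p i) by rewrite E dotv_sumr.
rewrite dotv0r (bigD1 i) //=.
have wp : 0 < w i by rewrite lt_def wi w0.
have h1 : w i * dotv x (p i) < 0 by rewrite pmulr_rlt0 // below.
have h2 : \sum_(j | j != i) w j * dotv x (p j) <= 0.
  by apply: sumr_le0 => j _; rewrite mulr_ge0_le0 // ltW // below.
lra.
Qed.

End InnerProduct.

Section RealFunctions.
Variable R : realType.

Lemma near_at_right0 (P : R -> Prop) :
  (exists2 d : R, 0 < d & forall h, 0 < h < d -> P h) -> \forall h \near 0^'+, P h.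
Proof.
move=> [d d0 Pd]; apply/nbhs_ballP; exists d => // h /= hd h0.
apply: Pd; rewrite h0 /=.
by move: hd; rewrite /ball /= sub0r normrN gtr0_norm.
Qed.

Lemma near_at_left0 (P : R -> Prop) :
  (exists2 d : R, 0 < d & forall h, - d < h < 0 -> P h) -> \forall h \near 0^'-, P h.
Proof.
move=> [d d0 Pd]; apply/nbhs_ballP; exists d => // h /= hd h0.
apply: Pd; rewrite h0 andbT.
by move: hd; rewrite /ball /= sub0r normrN ltr0_norm // ltrNl.
Qed.

Lemma MVT_dist (phi : R -> R) (x y : R) :
  (forall s, `|s - x| <= `|y - x| -> derivable phi s 1) ->
  exists2 xi, `|xi - x| <= `|y - x| & phi y - phi x = derive1 phi xi * (y - x).
Proof.
move=> D.
have [xy|yx] := leP x y.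
  have [||xi Hxi E] := @MVT_segment R phi (derive1 phi) x y xy.
  - move=> s Hs; rewrite derive1E; apply: derivableP; apply: D.
    rewrite !ger0_norm ?subr_ge0 //; last by rewrite ltW // (itvP Hs).
    by rewrite lerD2r ltW // (itvP Hs).
  - apply: derivable_within_continuous => s Hs; apply: D.
    rewrite !ger0_norm ?subr_ge0 ?(itvP Hs) //.
    by rewrite lerD2r (itvP Hs).
  exists xi => //.
  by rewrite !ger0_norm ?subr_ge0 ?(itvP Hxi) // lerD2r (itvP Hxi).
have [||xi Hxi E] := @MVT_segment R phi (derive1 phi) y x (ltW yx).
- move=> s Hs; rewrite derive1E; apply: derivableP; apply: D.
  rewrite !ler0_norm ?subr_le0 ?(ltW yx) //; last by rewrite ltW // (itvP Hs).
  by rewrite lerN2 lerD2r ltW // (itvP Hs).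
- apply: derivable_within_continuous => s Hs; apply: D.
  rewrite !ler0_norm ?subr_le0 ?(ltW yx) ?(itvP Hs) //.
  by rewrite lerN2 lerD2r (itvP Hs).
exists xi.
  by rewrite !ler0_norm ?subr_le0 ?(ltW yx) ?(itvP Hxi) // lerN2 lerD2r (itvP Hxi).
by apply: (can_inj (@opprK _)); rewrite opprB E -mulrN opprB.
Qed.

Lemma is_derive0_cst (phi : R -> R) (a b : R) :
  (forall t, a < t < b -> is_derive t 1 phi 0) ->
  forall x y, a < x < b -> a < y < b -> phi x = phi y.
Proof.
move=> D x y.
wlog xy : x y / x <= y.
  move=> W Hx Hy; have [/W|/ltW/W] := leP x y; first exact.
  by move=> H; symmetry; apply: H.
move=> /andP[ax xb] /andP[ay yb].
have [||xi _ E] := @MVT_segment R phi (fun _ => 0) x y xy.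
- move=> s Hs; apply: D; rewrite (lt_trans ax) ?(itvP Hs) //=.
  by apply: lt_trans yb; rewrite (itvP Hs).
- apply: derivable_within_continuous => s Hs.
  suff Hs' : a < s < b by have [] := D s Hs'.
  rewrite (lt_le_trans ax) ?(itvP Hs) //=.
  by apply: le_lt_trans yb; rewrite (itvP Hs).
by apply/eqP; rewrite eq_sym -subr_eq0 E mul0r.
Qed.

Lemma is_derive_cst_affine (phi : R -> R) (a b c : R) : a < b ->
  (forall t, a < t < b -> is_derive t 1 phi c) ->
  {within `[a, b], continuous phi} ->
  forall t, a <= t <= b -> phi t = phi a + (t - a) * c.
Proof.
move=> ab D C t /andP[ha tb].
have [->|tna] := eqVneq t a; first by rewrite subrr mul0r addr0.
have at' : a < t by rewrite lt_def tna.
have [||xi _ E] := @MVT R phi (fun _ => c) a t at'.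
- move=> x Hx; apply: D; rewrite (itvP Hx) /=.
  by apply: lt_le_trans tb; rewrite (itvP Hx).
- by apply: continuous_subspaceW C; apply: subset_itv; rewrite bnd_simp.
by rewrite mulrC -E addrC subrK.
Qed.

End RealFunctions.

Section DirectionalDerivative.
Variables (R : realType) (V : normedModType R).

Lemma is_derive_line (f : V -> R) p w s :
  derivable f (s *: w + p) w ->
  is_derive s 1 (fun t => f (t *: w + p)) ('D_w f (s *: w + p)).
Proof.
have E : (fun h : R => h^-1 *: (((fun t => f (t *: w + p)) \o shift s) (h *: 1)
            - (fun t => f (t *: w + p)) s)) =
         (fun h : R => h^-1 *: ((f \o shift (s *: w + p)) (h *: w) - f (s *: w + p))).
  apply: funext => h /=; congr (_ *: (f _ - _)).
  by rewrite [h *: 1]mulr1 scalerDl addrA.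
move=> D; apply: DeriveDef; first by rewrite /derivable E.
by rewrite /derive E.
Qed.

(* The difference quotients of f at q in the directions v + c w and v differ
   by a difference quotient of f along w based at q + h v, which the mean
   value theorem turns into c 'D_w f at a point near q. *)
Lemma derive_dirDZ (f : V -> R) (U : set V) q v w (c : R) :
  open U -> U q -> (forall x u, U x -> derivable f x u) ->
  {for q, continuous (fun x => 'D_w f x)} ->
  'D_(v + c *: w) f q = 'D_v f q + c * 'D_w f q.
Proof.
move=> Uo Uq Df Cw.
set Q := fun u (h : R) => h^-1 *: ((f \o shift q) (h *: u) - f q).
have cQ u : Q u @ 0^'+ --> 'D_u f q by exact: (cvg_dnbhs_at_right (Df q u Uq)).
suff key : (fun h => Q (v + c *: w) h - Q v h) @ 0^'+ --> c * 'D_w f q.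
  have := cvg_unique (@Rhausdorff R) key (cvgB (cQ (v + c *: w)) (cQ v)).
  by move=> ->; rewrite [RHS]addrC subrK.
apply/cvgrPdist_lt => e e0.
set e' := e / (`|c| + 1).
have e'0 : 0 < e' by rewrite divr_gt0 // ltr_pwDr // normr_ge0.
have NU : nbhs q U by apply: open_nbhs_nbhs.
have NC : \forall x \near q, `|'D_w f q - 'D_w f x| < e'.
  by move/cvgrPdist_lt : Cw; apply.
have [r r0 Hr] := (nbhs_ballP _ _).1 (filterI NU NC).
set M := `|v| + `|c| * `|w| + 1.
have M0 : 0 < M by rewrite ltr_pwDr // addr_ge0 // mulr_ge0.
apply: near_at_right0; exists (r / M); first by rewrite divr_gt0.
move=> h /andP[h0 hr].
set p := h *: v + q.
set phi := fun t => f (t *: w + p).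
have inball s : `|s| <= `|h * c| -> U (s *: w + p) /\
     `|'D_w f q - 'D_w f (s *: w + p)| < e'.
  move=> hs; apply: Hr; rewrite -ball_normE /= /p.
  rewrite addrA opprD addrCA subrr addr0 normrN.
  apply: (le_lt_trans (ler_normD _ _)); rewrite !normrZ (gtr0_norm h0).
  apply: (@le_lt_trans _ _ (h * M)); last by rewrite -ltr_pdivlMr.
  rewrite /M mulrDr mulrDr mulr1.
  apply: (@le_trans _ _ (h * `|v| + h * (`|c| * `|w|))); last by rewrite lerDl ltW.
  rewrite addrC lerD2l.
  apply: (le_trans (ler_wpM2r (normr_ge0 w) hs)).
  by rewrite normrM (gtr0_norm h0) mulrA.
have [xi Hxi E] : exists2 xi, `|xi - 0| <= `|h * c - 0| &
    phi (h * c) - phi 0 = derive1 phi xi * (h * c - 0).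
  apply: MVT_dist => s; rewrite !subr0 => hs.
  by have [] := is_derive_line (Df _ w (inball s hs).1).
rewrite !subr0 in Hxi.
have DE : derive1 phi xi = 'D_w f (xi *: w + p).
  by rewrite derive1E; have [_ <-] := is_derive_line (Df _ w (inball xi Hxi).1).
have -> : Q (v + c *: w) h - Q v h = c * 'D_w f (xi *: w + p).
  rewrite /Q /= -scalerBr opprB addrA subrK.
  have -> : h *: (v + c *: w) + q = (h * c) *: w + p.
    by rewrite /p scalerDr scalerA (addrC (h *: v)) -addrA.
  have -> : h *: v + q = 0 *: w + p by rewrite scale0r add0r.
  rewrite -/(phi (h * c)) -/(phi 0) E DE subr0.
  by rewrite [_ *: _]mulrC -mulrA mulrAC mulfV ?gt_eqF // mul1r mulrC.
rewrite -mulrBr normrM.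
apply: (@le_lt_trans _ _ (`|c| * e')); first by rewrite ler_wpM2l // ltW // (inball xi Hxi).2.
by rewrite /e' mulrA ltr_pdivrMr ?ltr_pwDr // mulrDr mulr1 mulrC ltrDl.
Qed.

End DirectionalDerivative.

Section OuterNormal.
Variables (R : realType) (n : nat).
Notation V := 'rV[R]_n.

Lemma derive_dir_gradv (U : set V) (f : V -> R) q d :
  open U -> U q -> smooth_on U f -> 'D_d f q = dotv d (gradv f q).
Proof.
move=> Uo Uq sm.
have Df x u : U x -> derivable f x u by move=> Ux; exact: ((sm [::]).2 x u Ux).
have Ce i : {for q, continuous (fun x => 'D_(delta_mx 0 i) f x)}.
  exact: ((sm [:: delta_mx 0 i]).1 q Uq).
have lin (r : seq 'I_n) : 'D_(\sum_(i <- r) d 0 i *: delta_mx 0 i) f q =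
    \sum_(i <- r) d 0 i * 'D_(delta_mx 0 i) f q.
  elim: r => [|i r IH]; first by rewrite !big_nil derive0.
  by rewrite !big_cons addrC (derive_dirDZ _ _ Uo Uq Df (Ce i)) IH addrC.
rewrite {1}(row_sum_delta d) lin /dotv.
by apply: eq_bigr => i _; rewrite mxE.
Qed.

(* For x in K the segment from q to x stays in K, where f <= 0 = f q near q,
   so the derivative of f at q towards x is nonpositive. *)
Lemma outer_normal_supports (K : set V) q nu : Defs.convex_set K -> K q ->
  is_outer_normal K q nu -> forall x, K x -> dotv x nu <= dotv q nu.
Proof.
move=> cK Kq [U [f [[[Uo Uq] sm fq0 gn0 KU] ->]]] x Kx.
set G := gradv f q.
have c0 : 0 <= (Num.sqrt (dotv G G))^-1 by rewrite invr_ge0 sqrtr_ge0.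
suff H : dotv (x - q) G <= 0.
  by rewrite -subr_ge0 -dotvBl dotvZr mulr_ge0 // -opprB dotvNl oppr_ge0.
rewrite -(derive_dir_gradv _ Uo Uq sm).
have Df : derivable f q (x - q) by exact: ((sm [::]).2 q _ Uq).
apply: (cvgr_to_le (cvg_dnbhs_at_right Df)).
have [r r0 Hr] := (nbhs_ballP _ _).1 (open_nbhs_nbhs (conj Uo Uq)).
apply: near_at_right0.
exists (Num.min 1 (r / (`|x - q| + 1))).
  by rewrite lt_min ltr01 divr_gt0 // ltr_pwDr // normr_ge0.
move=> h /andP[h0]; rewrite lt_min => /andP[h1 hr].
have Kh : K (h *: (x - q) + q).
  have -> : h *: (x - q) + q = h *: x + (1 - h) *: q.
    by rewrite scalerBr scalerBl scale1r -addrA (addrC (- _)).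
  by apply: (cK x q h Kx Kq); rewrite (ltW h0) ltW.
have Uh : U (h *: (x - q) + q).
  apply: Hr; rewrite -ball_normE /= opprD addrCA subrr addr0 normrN normrZ.
  rewrite (gtr0_norm h0).
  apply: (@le_lt_trans _ _ (h * (`|x - q| + 1))).
    by apply: ler_wpM2l; [exact: ltW | rewrite lerDl].
  by rewrite -ltr_pdivlMr // ltr_pwDr // normr_ge0.
have [_ fle] : [set x | U x /\ f x <= 0] (h *: (x - q) + q) by rewrite -KU.
by rewrite /= fq0 subr0 mulr_ge0_le0 // invr_ge0 ltW.
Qed.

Lemma outer_normalP (K : set V) q :
  outer_normal K q != 0 -> is_outer_normal K q (outer_normal K q).
Proof. by rewrite /outer_normal; case: xgetP => // _; rewrite eqxx. Qed.

Lemma outer_normal_neq0 (K : set V) q w :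
  orth (tangent_space K q) w -> w != 0 -> outer_normal K q != 0.
Proof.
move=> ortho w0; apply/negP => /eqP N0.
have : dotv w w = 0 by apply: ortho; rewrite /tangent_space /= N0 dotv0r.
by move/dotvv_eq0 => /eqP; rewrite (negPf w0).
Qed.

Lemma supp_fun_le_supported (K S : set V) q nu : S q -> S `<=` K ->
  (forall y, K y -> dotv y nu <= dotv q nu) -> supp_fun K nu <= supp_fun S nu.
Proof.
move=> Sq SK sup.
apply: (@le_trans _ _ (dotv q nu)).
  apply: ge_sup; first by exists (dotv q nu), q => //; exact: SK.
  by move=> y [s Ks <-]; exact: sup.
apply: sup_upper_bound; last by exists q.
split; first by exists (dotv q nu), q.
by exists (dotv q nu) => y [s Ss <-]; exact: sup (SK s Ss).
Qed.

(* A small step e nu from q + x stays in the interior ball, hence in K. *)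
Lemma interior_below_support (K : set V) q nu x : nu != 0 ->
  (forall y, K y -> dotv y nu <= dotv q nu) -> K° (q + x) -> dotv x nu < 0.
Proof.
move=> nu0 sup intx.
have nnp : 0 < dotv nu nu by apply: dotvv_gt0.
have [r r0 Hr] := (nbhs_ballP _ _).1 intx.
set e := r / (`|nu| + 1).
have e0 : 0 < e by rewrite divr_gt0 // ltr_pwDr // normr_ge0.
have : K (q + x + e *: nu).
  apply: Hr; rewrite -ball_normE /= opprD addrA subrr sub0r normrN normrZ.
  by rewrite (gtr0_norm e0) /e mulrAC ltr_pdivrMr ?ltr_pwDr // mulrDr mulr1 ltrDl.
move/sup; rewrite !dotvDl dotvZl => h.
have := mulr_gt0 e0 nnp; lra.
Qed.

End OuterNormal.

Section FiniteSets.
Variable R : realType.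

Lemma seq_max_exists (d : Order.disp_t) (T : orderType d) (s : seq T) :
  s != [::] -> exists2 m, m \in s & forall x, x \in s -> (x <= m)%O.
Proof.
elim: s => // x s IH _.
have [->|sn] := eqVneq s [::].
  by exists x; rewrite ?mem_seq1 // => y; rewrite mem_seq1 => /eqP ->.
have [m ms Hm] := IH sn.
have [xm|mx] := leP x m.
  exists m; first by rewrite inE ms orbT.
  by move=> y; rewrite inE => /orP[/eqP ->|/Hm].
exists x; first by rewrite inE eqxx.
move=> y; rewrite inE => /orP[/eqP ->//|/Hm ym].
exact: le_trans ym (ltW mx).
Qed.

Lemma finite_set_enum (A : set R) : finite_set A ->
  exists s : seq R, uniq s /\ forall x, x \in s <-> A x.
Proof.
move=> fA; exists (enum_fset (fset_set A)); split; first exact: fset_uniq.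
by move=> x; rewrite (in_fset_set fA x) in_setE.
Qed.

Lemma seq_sep (s : seq R) t : exists2 d, 0 < d &
  forall x, x \in s -> x != t -> d <= `|x - t|.
Proof.
elim: s => [|x s [d d0 Hd]]; first by exists 1.
have [->|xt] := eqVneq x t.
  exists d => // y; rewrite inE => /orP[/eqP ->|ys]; first by rewrite eqxx.
  exact: Hd.
exists (Num.min d `|x - t|); first by rewrite lt_min d0 normr_gt0 subr_eq0.
move=> y; rewrite inE => /orP[/eqP -> _|ys yt]; first by rewrite ge_min lexx orbT.
by rewrite ge_min Hd.
Qed.

Lemma isolated_in_window (P : set R) (s : seq R) a b t :
  (forall x, x \in s <-> P x /\ a < x < b) -> t \in s ->
  exists2 d, 0 < d &
    (forall x, t - d < x < t -> ~ P x) /\ (forall x, t < x < t + d -> ~ P x).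
Proof.
move=> rep ts; have [_ /andP[ha ta]] := (rep t).1 ts.
have [d d0 Hd] := seq_sep s t.
set d' := Num.min d (Num.min (t - a) (b - t)).
have e1 : d' <= d by rewrite ge_min lexx.
have e2 : d' <= t - a by rewrite ge_min ge_min lexx !orbT.
have e3 : d' <= b - t by rewrite ge_min ge_min lexx !orbT.
exists d'; first by rewrite !lt_min d0 !subr_gt0 ha ta.
split=> x /andP[x1 x2] Px.
- have xs : x \in s by apply/rep; split => //; apply/andP; split; lra.
  have := Hd x xs (negbT (lt_eqF x2)).
  by rewrite ltr0_norm ?subr_lt0 // opprB; lra.
- have xs : x \in s by apply/rep; split => //; apply/andP; split; lra.
  have := Hd x xs (negbT (gt_eqF x1)).
  by rewrite gtr0_norm ?subr_gt0 //; lra.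
Qed.

End FiniteSets.

Lemma is_derive_coord (R : realType) (n : nat) (h : R -> 'rV[R]_n) t j :
  derivable h t 1 -> is_derive t 1 (fun s => h s 0 j) ((derive1 h t) 0 j).
Proof.
move=> D; apply: DeriveDef; first by move/derivable_mxP: D.
by rewrite derive1E (derive_mx D) mxE.
Qed.

Section BilliardTrajectory.
Variables (R : realType) (n : nat) (K : set 'rV[R]_n) (g : R -> 'rV[R]_n) (B : set R).
Hypothesis hb : billiard_traj K g B.
Notation nu t := (outer_normal K (g t)).

Let g_cont : continuous g. Proof. by case: hb => [[]]. Qed.
Let g_periodic t : g (t + 1) = g t. Proof. by case: hb => [[]]. Qed.
Let g_in_K t : K (g t). Proof. by case: hb => _ _ [inK _] _ _; apply: inK. Qed.
Let B_periodic t : B t <-> B (t + 1). Proof. by case: hb => _ _ [_ []]. Qed.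
Let B_finite : finite_set (B `&` `[0, 1[). Proof. by case: hb => _ _ [_ []]. Qed.

Lemma billiard_periodicz x (k : int) : g (x + k%:~R) = g x.
Proof.
have gn y (m : nat) : g (y + m%:R) = g y.
  elim: m => [|m IH]; first by rewrite addr0.
  by rewrite -[m.+1]addn1 natrD addrA g_periodic.
case: k => m; first exact: gn.
by rewrite NegzE mulrNz -[in RHS](subrK (m.+1%:R) x) gn.
Qed.

Lemma billiard_affine_between a b : a < b -> (forall t, a < t < b -> ~ B t) ->
  exists C, (forall t, a < t < b -> derive1 g t = C) /\
            (forall t, a <= t <= b -> g t = g a + (t - a) *: C).
Proof.
move=> ab free.
have D t : a < t < b -> [/\ derivable g t 1, derivable (derive1 g) t 1 &
    derive1 (derive1 g) t = 0].
  by move=> Ht; case: hb => _ _ _ /(_ t (free t Ht)).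
set C := derive1 g ((a + b) / 2).
have mab : a < (a + b) / 2 < b by rewrite midf_lt // midf_lt.
have dC t : a < t < b -> derive1 g t = C.
  move=> Ht; apply/rowP => j.
  apply: (@is_derive0_cst R (fun s => derive1 g s 0 j) a b) => // s Hs.
  have [_ D2 D3] := D s Hs.
  by have := is_derive_coord j D2; rewrite D3 mxE.
exists C; split => // t Ht.
apply/rowP => j; rewrite !mxE.
apply: (@is_derive_cst_affine R (fun s => g s 0 j) a b (C 0 j) ab) => //.
- move=> s Hs; have [D1 _ _] := D s Hs.
  by have := is_derive_coord j D1; rewrite dC.
- apply: continuous_subspaceT => x.
  apply: (@continuous_comp _ _ _ g (fun M : 'M[R]_(1, n) => M 0 j)); first exact: g_cont.
  exact: coord_continuous.
Qed.

Lemma billiard_reflects a : exists t, B t /\ a < t < a + 1.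
Proof.
apply: contrapT => none.
have free t : a < t < a + 1 -> ~ B t by move=> Ht Bt; apply: none; exists t.
have aa1 : a < a + 1 by rewrite ltrDl.
have [C [_ aff]] := billiard_affine_between aa1 free.
have C0 : C = 0.
  have := aff (a + 1); rewrite g_periodic lexx ltW ?ltrDl // => /(_ isT).
  rewrite addrAC subrr add0r scale1r => E.
  by apply: (@addrI _ (g a)); rewrite addr0 -E.
have cst t : g t = g a.
  set k := Num.floor (t - a).
  have := floor_itv (t - a); rewrite -/k => /andP[k1 k2].
  rewrite -(subrK (k%:~R) t) billiard_periodicz aff ?C0 ?scaler0 ?addr0 //.
  rewrite intrD in k2; apply/andP; split; lra.
by case: hb => _ [x [y /eqP]]; rewrite !cst.
Qed.

Definition vright t := lim (derive1 g (t + h) @[h --> 0^'+]).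
Definition vleft t := lim (derive1 g (t + h) @[h --> 0^'-]).
Definition jump t := vright t - vleft t.

Lemma vright_vleft_cst a b C : a < b -> (forall t, a < t < b -> derive1 g t = C) ->
  vright a = C /\ vleft b = C.
Proof.
move=> ab dC; split; (apply: cvg_lim; first exact: norm_hausdorff);
  apply/cvgrPdist_lt => e e0.
  apply: near_at_right0; exists (b - a); first by rewrite subr_gt0.
  move=> h /andP[h0 hb']; rewrite dC ?subrr ?normr0 //.
  by rewrite ltrDl h0 /= -ltrBrDl.
apply: near_at_left0; exists (b - a); first by rewrite subr_gt0.
move=> h /andP[hb' h0]; rewrite dC ?subrr ?normr0 //.
rewrite gtrDl h0 andbT; lra.
Qed.

Lemma vleft_vright_free a b t : a < t < b -> (forall x, a < x < b -> ~ B x) ->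
  vleft t = vright t.
Proof.
move=> /andP[at' tb] free.
have [C [dC _]] := billiard_affine_between (lt_trans at' tb) free.
have dCl x : a < x < t -> derive1 g x = C.
  by move=> /andP[ax xt]; apply: dC; rewrite ax (lt_trans xt tb).
have dCr x : t < x < b -> derive1 g x = C.
  by move=> /andP[tx xb]; apply: dC; rewrite xb andbT (lt_trans at' tx).
have [_ ->] := vright_vleft_cst at' dCl.
by have [-> _] := vright_vleft_cst tb dCr.
Qed.

Lemma vright_periodic t : vright (t + 1) = vright t.
Proof.
have dg s : derive1 g (s + 1) = derive1 g s.
  rewrite /derive1 (_ : (fun h => _) = (fun h => h^-1 *: (g (h + s) - g s))) //.
  by apply: funext => h; rewrite addrA !g_periodic.
rewrite /vright (_ : (fun h => _) = (fun h => derive1 g (t + h))) //.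
by apply: funext => h; rewrite addrAC dg.
Qed.

Lemma sum_jumps (s : seq R) a b : a < b -> uniq s ->
  (forall x, x \in s <-> (B x /\ a < x < b)) ->
  \sum_(t <- s) jump t = vleft b - vright a.
Proof.
move: {2}(size s) (leqnn (size s)) => k.
elim: k s a b => [|k IH] s a b.
  rewrite leqn0 size_eq0 => /eqP -> ab _ rep.
  have free t : a < t < b -> ~ B t by move=> Ht Bt; have := (rep t).2 (conj Bt Ht); rewrite in_nil.
  have [C [dC _]] := billiard_affine_between ab free.
  by have [-> ->] := vright_vleft_cst ab dC; rewrite big_nil subrr.
move=> sk ab us rep.
have [s0|sn] := eqVneq s [::]; first by apply: (IH s) => //; rewrite s0.
have [m ms Hm] := seq_max_exists sn.
have [Bm /andP[am mb]] := (rep m).1 ms.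
rewrite (big_rem m ms) /=.
have rep' x : x \in rem m s <-> (B x /\ a < x < m).
  rewrite (mem_rem_uniq m us) inE; split.
    move=> /andP[xm xs]; have [Bx /andP[ax _]] := (rep x).1 xs.
    by split => //; rewrite ax /= lt_def eq_sym xm Hm.
  move=> [Bx /andP[ax xm]]; rewrite lt_eqF //=.
  by apply/(rep x).2; split => //; rewrite ax (lt_trans xm).
have szr : (size (rem m s) <= k)%N.
  by rewrite size_rem // -ltnS (leq_trans _ sk) // prednK // lt0n size_eq0.
rewrite (IH (rem m s) a m) ?rem_uniq //.
have free t : m < t < b -> ~ B t.
  move=> /andP[mt tb] Bt.
  have := Hm t ((rep t).2 (conj Bt (introT andP (conj (lt_trans am mt) tb)))).
  by rewrite leNgt mt.
have [C [dC _]] := billiard_affine_between mb free.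
rewrite /jump; have [-> ->] := vright_vleft_cst mb dC.
by rewrite addrA subrK.
Qed.

(* A window (a, a + 1] whose right end lies strictly after the last
   reflection in [0, 1), so that the velocity is continuous there. *)
Lemma period_window : exists a (s : seq R),
  [/\ uniq s, forall x, x \in s <-> B x /\ a < x < a + 1 & vleft (a + 1) = vright a].
Proof.
have [s [us Hs]] := finite_set_enum B_finite.
have inF x : x \in s <-> (B x /\ 0 <= x < 1) by rewrite Hs /= in_itv.
have [p p0 pmax] := seq_max_exists (isT : 0 :: s != [::]).
have [p0' p1] : 0 <= p /\ p < 1.
  by move: p0; rewrite inE => /orP[/eqP ->|/inF [_ /andP[]]] //; rewrite lexx ltr01.
have pfree x : p < x < 1 -> ~ B x.
  move=> /andP[px x1] Bx.
  have xs : x \in s by apply/inF; rewrite x1 andbT; split => //; lra.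
  by have := pmax x; rewrite inE xs orbT => /(_ isT); rewrite leNgt px.
set a := (p + 1) / 2 - 1.
have a1E : a + 1 = (p + 1) / 2 by rewrite /a subrK.
have pa1 : p < a + 1 < 1 by rewrite a1E midf_lt // midf_lt.
exists a, s; split; [exact: us | | by rewrite (vleft_vright_free pa1 pfree) vright_periodic].
move=> x; rewrite inF; split.
  move=> [Bx /andP[x0 x1]]; split => //; apply/andP; split; first lra.
  have := pmax x; rewrite inE.
  have -> : x \in s by apply/inF; split => //; rewrite x0 x1.
  by rewrite orbT => /(_ isT) xp; apply: le_lt_trans xp (andP pa1).1.
move=> [Bx /andP[ax xa]]; split => //.
have [x0|x0] := leP 0 x; first by rewrite (lt_trans xa) ?(andP pa1).2.
exfalso; apply: (pfree (x + 1)); last exact: (B_periodic x).1 Bx.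
case/andP: pa1 => h1 h2; apply/andP; split; lra.
Qed.

Hypothesis cK : Defs.convex_set K.

Lemma reflection_support t : B t -> nu t != 0 /\
  forall x, K x -> dotv x (nu t) <= dotv (g t) (nu t).
Proof.
move=> Bt; case: hb => _ _ _ _ /(_ t Bt) [_ [vp [vm [_ _ _ o nz]]]].
have nn := outer_normal_neq0 o nz; split => //.
exact: outer_normal_supports cK (g_in_K t) (outer_normalP nn).
Qed.

Definition jump_coef t := dotv (jump t) (nu t) / dotv (nu t) (nu t).

(* Just before t the trajectory reaches g t from inside K and just after t it
   moves back into K, so the outgoing velocity has a nonpositive and the
   incoming one a nonnegative component along the outer normal. *)
Lemma jump_normal t d : B t -> 0 < d ->
  (forall x, t - d < x < t -> ~ B x) -> (forall x, t < x < t + d -> ~ B x) ->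
  jump t = jump_coef t *: nu t /\ jump_coef t < 0.
Proof.
move=> Bt d0 fl fr.
case: (hb) => _ _ _ _ /(_ t Bt) [_ [vp [vm [cp cm _ o nz]]]].
have [nn sup] := reflection_support Bt.
have td : t < t + d by rewrite ltrDl.
have dt : t - d < t by rewrite gtrDl oppr_lt0.
have [C1 [dC1 aff1]] := billiard_affine_between td fr.
have [C2 [dC2 aff2]] := billiard_affine_between dt fl.
have [R1 _] := vright_vleft_cst td dC1.
have [_ L2] := vright_vleft_cst dt dC2.
have Rp : vright t = vp by apply: cvg_lim; [exact: norm_hausdorff | exact: cp].
have Lm : vleft t = vm by apply: cvg_lim; [exact: norm_hausdorff | exact: cm].
have C1_out : dotv C1 (nu t) <= 0.
  have := sup _ (g_in_K (t + d)).
  rewrite aff1; last by rewrite lexx ltW.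
  by rewrite addrAC subrr add0r dotvDl dotvZl gerDl pmulr_rle0.
have C2_in : 0 <= dotv C2 (nu t).
  have := sup _ (g_in_K (t - d)).
  rewrite [X in _ <= dotv X _]aff2; last by rewrite lexx ltW.
  by rewrite opprB addrCA subrr addr0 dotvDl dotvZl lerDl pmulr_rge0.
have JE : jump t = vp - vm by rewrite /jump Rp Lm.
have Jp : jump t = jump_coef t *: nu t by rewrite /jump_coef JE; apply: orth_hyperplane_parallel.
split => //.
have Jn : dotv (jump t) (nu t) <= 0.
  by rewrite JE -Rp -Lm R1 L2 dotvBl subr_le0 (le_trans C1_out).
rewrite lt_def; apply/andP; split.
  by apply/eqP => c0; move: nz; rewrite -JE Jp -c0 scale0r eqxx.
by rewrite /jump_coef mulr_le0_ge0 // invr_ge0 ltW // dotvv_gt0.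
Qed.

Lemma normals_conv_hull0 : conv_hull [set nu t | t in B] 0.
Proof.
have [a [s [us rep vE]]] := period_window.
have jumps t : t \in s -> B t /\ jump t = jump_coef t *: nu t /\ jump_coef t < 0.
  move=> ts; have [Bt _] := (rep t).1 ts; split; first exact: Bt.
  have [d d0 [fl fr]] := isolated_in_window rep ts.
  exact: jump_normal Bt d0 fl fr.
apply: (@conv_hull0_pos_comb _ _ _ _ _ (fun t => - jump_coef t) s).
- have [t [Bt ta]] := billiard_reflects a.
  by apply/eqP => s0; have := (rep t).2 (conj Bt ta); rewrite s0.
- by move=> t /jumps[Bt [_ neg]]; split; last rewrite oppr_gt0.
- have aa1 : a < a + 1 by rewrite ltrDl.
  have := sum_jumps aa1 us rep; rewrite vE subrr => sum0.
  apply: oppr_inj; rewrite oppr0 -[RHS]sum0 -sumrN.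
  by apply: eq_big_seq => t /jumps[_ [-> _]]; rewrite scaleNr opprK.
Qed.

Lemma billiard_supp_fun_le t : B t ->
  supp_fun K (nu t) <= supp_fun (range g) (nu t).
Proof.
move=> Bt; apply: (@supp_fun_le_supported _ _ _ _ (g t)); first by exists t.
  by move=> _ [s _ <-].
exact: (reflection_support Bt).2.
Qed.

Lemma billiard_not_in_interior x : ~ (forall t, K° (g t + x)).
Proof.
move=> intx; apply: (conv_hull0_not_below normals_conv_hull0) => _ [t Bt <-].
have [nn sup] := reflection_support Bt.
exact: interior_below_support nn sup (intx t).
Qed.

End BilliardTrajectory.

Lemma billiard_piecewise_linear (R : realType) (n : nat) (K : set 'rV[R]_n)
    (g : R -> 'rV[R]_n) (B : set R) :
  billiard_traj K g B -> piecewise_linear_closed g.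
Proof.
move=> hb; case: (hb) => [[gper gcont]] _ [_ Bfin] _ _.
split => //; exists B; split => // a b ab free.
have [C [_ aff]] := billiard_affine_between hb ab free.
exists (g a - a *: C), C => t Ht; rewrite aff //.
by rewrite scalerBl addrA addrAC.
Qed.

Unset Implicit Arguments.
Set Strict Implicit.

Theorem lemma6p2 (R : realType) (n : nat) (K : set 'rV[R]_n)
  (g : R -> 'rV[R]_n) (B : set R) :
  convex_body K -> smooth_boundary K -> billiard_traj K g B ->
  let N := [set outer_normal K (g t) | t in B] in
  [/\ conv_hull N 0,
      (forall nu, N nu -> supp_fun K nu <= supp_fun (range g) nu) &
      in_Pplus K g].
Proof.
move=> [_ [cK _]] _ hb N; split.
- exact: normals_conv_hull0 hb cK.
- by move=> _ [t Bt <-]; exact: (billiard_supp_fun_le hb cK Bt).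
- by split; [exact: billiard_piecewise_linear hb | exact: billiard_not_in_interior hb cK].
Qed.
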